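(* Assume $I_\delta=0$. There exists a constant $C_L$, independent of $\delta$ (and of $c\in[c_0,c_1]$ and $R_0\in\mathcal{R}_c$), such that for all $\delta$-admissible $S_1,S_2\in\mathsf{X}$ and $G_\ell=\mathcal{G}(S_\ell)$, $\ell=1,2$, $$\|\mathcal{A}^2G_2-\mathcal{A}^2G_1\|_\infty+\|\mathcal{A}G_2-\mathcal{A}G_1\|_\infty+\delta\|G_2-G_1\|_\infty\le C_L\,\delta\,\|S_2'-S_1'\|_\infty .$$
   Context: $(\mathcal{A}F)(x)=\int_{x-1/2}^{x+1/2}F(s)\,ds$, $\Delta_1F(x)=F(x+1)-2F(x)+F(x-1)$, $a(k)=\frac{\sin(k/2)}{k/2}$, $\Psi_0'(r)=\mathrm{sgn}(r)$. Potentials: $(\Psi_\delta)_{\delta>0}$ is a family of $C^2$ functions such that $\Psi_\delta'(r)=\mathrm{sgn}(r)$ for $r\notin(-\delta,\delta)$, and $|\Psi_\delta'|\le C_\Psi$, $|\Psi_\delta''|\le C_\Psi/\delta$ on $\mathbb{R}$ with $C_\Psi$ independent of $\delta$; $I_\delta:=\frac12\int_{\mathbb{R}}(\Psi_\delta'-\Psi_0')\,dr$. Unperturbed waves (standing hypothesis, a known result): there are constants $0<c_0<1$ and $x_0,r_0,d_0,D_0>0$ such that for every $c\in[c_0,1)$ the equation $a(k)=c$ has exactly one positive solution $k_c$, and there is a two-parameter family $\mathcal{R}_c$ of functions $R_0\in W^{2,\infty}(\mathbb{R})$ solving $c^2R_0''=\Delta_1(R_0-\mathrm{sgn}(R_0))$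 with $R_0(0)=0$, given by $R_0=\bar R_0+\alpha(\cos(k_c\cdot)-1)+\beta\sin(k_c\cdot)$, $(\alpha,\beta)$ in an open neighbourhood $U_c$ of $0\in\mathbb{R}^2$, where $\bar R_0$ is a fixed member for which $\lim_{x\to+\infty}\bar R_0(x)$ exists and $\lim_{x\to-\infty}(\bar R_0(x)-\alpha_c^-(\cos(k_cx)-1)-\beta_c^-\sin(k_cx))$ exists for some constants $\alpha_c^-,\beta_c^-$. Every $R_0\in\mathcal{R}_c$ satisfies $\|R_0\|_\infty\le D_0(1-c^2)^{-1}$, $R_0(x)>r_0$ for $x>x_0$, $R_0(x)<-r_0$ for $x<-x_0$, $R_0'(x)>d_0$ for $|x|<x_0$. Setting: $c_1\in(c_0,1)$ fixed, $c\in[c_0,c_1]$, $R_0\in\mathcal{R}_c$ fixed. $\mathsf{X}:=\{S\in W^{2,\infty}(\mathbb{R}):S(0)=0,\ \lim_{x\to+\infty}S(x)\text{ exists}\}$. $\mathcal{G}(S)(x):=\Psi_\delta'(R_0(x)+S(x))-\Psi_0'(R_0(x))$. $S\in\mathsf{X}$ is called $\delta$-admissible if there exist $x_-<0<x_+$ with: $R_0(x_\pm)+S(x_\pm)=\pm\delta$; $R_0(x)+S(x)<-\delta$ for $x<x_-$; $R_0(x)+S(x)>\delta$ for $x>x_+$; and $\frac12R_0'(0)<R_0'(x)+S'(x)<2R_0'(0)$ for $x_-<x<x_+$. *)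

From Stdlib Require Import Reals Lra Classical ClassicalEpsilon.
Open Scope R_scope.

(* sign function: sgn r = 1, -1, 0 for r > 0, r < 0, r = 0.  Psi_0'(r) = sgn r. *)
Definition sgn (r : R) : R :=
  if Rlt_dec 0 r then 1 else if Rlt_dec r 0 then -1 else 0.

(* Total Riemann integral: the value of RiemannInt when f is Riemann
   integrable on [a,b] (the value is proof-independent), and 0 otherwise. *)
Definition Rint (f : R -> R) (a b : R) : R :=
  match excluded_middle_informative
          (exists I, exists pr : Riemann_integrable f a b, RiemannInt pr = I) with
  | left h => proj1_sig (constructive_indefinite_description _ h)
  | right _ => 0
  end.

Definition Aop (F : R -> R) (x : R) : R := Rint F (x - /2) (x + /2).

Definition Delta1 (F : R -> R) (x : R) : R := F (x + 1) - 2 * F x + F (x - 1).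

Definition afun (k : R) : R := sin (k / 2) / (k / 2).

Definition lim_pinf (f : R -> R) (L : R) : Prop :=
  forall eps, 0 < eps -> exists M, forall x, M < x -> Rabs (f x - L) < eps.
Definition lim_minf (f : R -> R) (L : R) : Prop :=
  forall eps, 0 < eps -> exists M, forall x, x < M -> Rabs (f x - L) < eps.

(* W^{2,oo}(R) (continuous representative): f is differentiable, f and f'
   are bounded, f' is Lipschitz. *)
Definition W2inf (f : R -> R) : Prop :=
  exists f1 : R -> R,
    (forall x, derivable_pt_lim f x (f1 x)) /\
    (exists B, forall x, Rabs (f x) <= B /\ Rabs (f1 x) <= B) /\
    (exists K, forall x y, Rabs (f1 x - f1 y) <= K * Rabs (x - y)).

Definition inX (S : R -> R) : Prop :=
  W2inf S /\ S 0 = 0 /\ exists L, lim_pinf S L.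

Definition PsiFamily (CPsi : R) (Psi dPsi ddPsi : R -> R -> R) : Prop :=
  forall d, 0 < d ->
    (forall r, derivable_pt_lim (Psi d) r (dPsi d r)) /\
    (forall r, derivable_pt_lim (dPsi d) r (ddPsi d r)) /\
    continuity (ddPsi d) /\
    (forall r, ~ (-d < r < d) -> dPsi d r = sgn r) /\
    (forall r, Rabs (dPsi d r) <= CPsi) /\
    (forall r, Rabs (ddPsi d r) <= CPsi / d).

(* I_delta = 1/2 int_R (Psi_delta' - Psi_0') dr ; the integrand vanishes
   outside (-delta, delta). *)
Definition Idelta (dPsi : R -> R -> R) (d : R) : R :=
  / 2 * Rint (fun r => dPsi d r - sgn r) (- d) d.

Definition member (k : R -> R) (Rbar : R -> R -> R) (c alpha beta : R) (x : R) : R :=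
  Rbar c x + alpha * (cos (k c * x) - 1) + beta * sin (k c * x).

Definition UnperturbedWaves (c0 x0 r0 d0 D0 : R) (k : R -> R)
    (Rbar : R -> R -> R) (U : R -> R -> R -> Prop) (alm bem : R -> R) : Prop :=
  0 < c0 < 1 /\ 0 < x0 /\ 0 < r0 /\ 0 < d0 /\ 0 < D0 /\
  forall c, c0 <= c < 1 ->
    (0 < k c /\ afun (k c) = c /\ forall k', 0 < k' -> afun k' = c -> k' = k c) /\
    U c 0 0 /\
    (forall al be, U c al be -> exists eps, 0 < eps /\
        forall al' be', Rabs (al' - al) < eps -> Rabs (be' - be) < eps -> U c al' be') /\
    (exists L, lim_pinf (Rbar c) L) /\
    (exists L, lim_minf (fun x => Rbar c x - alm c * (cos (k c * x) - 1)
                                  - bem c * sin (k c * x)) L) /\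
    forall al be, U c al be ->
      let R0 := member k Rbar c al be in
      W2inf R0 /\ R0 0 = 0 /\
      (forall dR0 : R -> R, (forall x, derivable_pt_lim R0 x (dR0 x)) ->
         (* c^2 R0'' = Delta_1 (R0 - sgn R0), in integrated (weak) form *)
         (forall x y, x <= y ->
            c ^ 2 * (dR0 y - dR0 x) = Rint (Delta1 (fun s => R0 s - sgn (R0 s))) x y) /\
         (forall x, Rabs x < x0 -> d0 < dR0 x)) /\
      (forall x, Rabs (R0 x) <= D0 / (1 - c ^ 2)) /\
      (forall x, x0 < x -> r0 < R0 x) /\
      (forall x, x < - x0 -> R0 x < - r0).

Definition Gop (dPsi : R -> R -> R) (d : R) (R0 S : R -> R) (x : R) : R :=
  dPsi d (R0 x + S x) - sgn (R0 x).

(* delta-admissibility; dR0, dS are the derivatives of R0, S *)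
Definition admissible (d : R) (R0 dR0 S dS : R -> R) : Prop :=
  exists xm xp, xm < 0 < xp /\
    R0 xm + S xm = - d /\ R0 xp + S xp = d /\
    (forall x, x < xm -> R0 x + S x < - d) /\
    (forall x, xp < x -> d < R0 x + S x) /\
    (forall x, xm < x < xp -> / 2 * dR0 0 < dR0 x + dS x < 2 * dR0 0).

From Stdlib Require Import Reals Lra ClassicalEpsilon FunctionalExtensionality.
From Coquelicot Require Import Coquelicot.
Open Scope R_scope.

(* Write D = G2 - G1 and rho = 2 delta / d0, where d0 bounds R0' from below
   near 0.  Admissibility forces R0 + S_l to leave (-delta, delta) outside
   [-rho, rho], where Psi_delta' = sgn, so D vanishes for |z| > rho.  Inside,
   |Psi_delta''| <= C_Psi / delta and |S2 - S1|(z) <= |z| ||S2' - S1'||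
   (because S_l(0) = 0) give |D| <= M := 2 C_Psi L / d0.  An average over a
   window of length one of a function bounded by M and supported in
   [-rho, rho] is bounded by 2 rho M, and averaging never increases the sup
   norm; hence both A D and A^2 D are bounded by 2 rho M = O(delta L). *)

Lemma Rint_RInt f a b : ex_RInt f a b -> Rint f a b = RInt f a b.
Proof.
  intros Hf. unfold Rint.
  destruct (excluded_middle_informative _) as [Hex | Hnex].
  - destruct (constructive_indefinite_description _ Hex) as [I [pr HI]]; simpl.
    rewrite <- HI. symmetry. apply RInt_Reals.
  - exfalso. apply Hnex. exists (RInt f a b), (ex_RInt_Reals_0 f a b Hf).
    symmetry. apply RInt_Reals.
Qed.

Definition loc_integrable (f : R -> R) : Prop := forall u v, ex_RInt f u v.

Definition window (f : R -> R) (t : R) : R := RInt f (t - /2) (t + /2).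

Lemma Aop_window f : loc_integrable f -> Aop f = window f.
Proof.
  intros Hf. apply functional_extensionality. intros t.
  apply Rint_RInt, Hf.
Qed.

Lemma shift_continuous (a t : R) : continuous (fun t => t + a) t.
Proof.
  apply continuity_pt_filterlim, continuity_pt_plus.
  - apply continuity_pt_id.
  - apply continuity_pt_const. intros u v. reflexivity.
Qed.

(* The window average of a locally integrable function is continuous, hence
   again locally integrable; this is what allows A to be iterated. *)
Lemma window_continuous f t : loc_integrable f -> continuous (window f) t.
Proof.
  intros Hf.
  apply (continuous_comp_2 (fun t => t + - /2) (fun t => t + /2) (RInt f));
    try apply shift_continuous.
  apply (continuous_RInt f (t - /2) (t + /2) (RInt f)).
  apply filter_forall. intros z.
  apply (RInt_correct (V:=R_CompleteNormedModule)), Hf.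
Qed.

Lemma window_loc_integrable f : loc_integrable f -> loc_integrable (window f).
Proof.
  intros Hf u v. apply (ex_RInt_continuous (V:=R_CompleteNormedModule)).
  intros t _. apply window_continuous, Hf.
Qed.

Lemma window_minus f g t : loc_integrable f -> loc_integrable g ->
  window (fun x => g x - f x) t = window g t - window f t.
Proof. intros Hf Hg. apply (RInt_minus g f); auto. Qed.

Lemma window_bound f B t : loc_integrable f -> (forall z, Rabs (f z) <= B) ->
  Rabs (window f t) <= B.
Proof.
  intros Hf HB. unfold window.
  replace B with ((t + /2 - (t - /2)) * B) by field.
  apply abs_RInt_le_const; auto. lra.
Qed.

Lemma RInt_vanishing f a b : a <= b -> (forall x, a < x < b -> f x = 0) ->
  RInt f a b = 0.
Proof.
  intros Hab Hf. rewrite (RInt_ext f (fun _ => 0)).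
  - rewrite RInt_const. exact (scal_zero_r (V:=R_NormedModule) (b - a)).
  - intros x. rewrite Rmin_left, Rmax_right by lra. apply Hf.
Qed.

Lemma RInt_supported_bound f a b l r M : a <= b -> l <= r ->
  loc_integrable f -> (forall z, Rabs (f z) <= M) ->
  (forall z, z < l \/ r < z -> f z = 0) ->
  Rabs (RInt f a b) <= (r - l) * M.
Proof.
  intros Hab Hlr Hf HM Hsupp.
  assert (M0 : 0 <= M) by (specialize (HM 0); pose proof (Rabs_pos (f 0)); lra).
  set (p := Rmin b (Rmax a l)). set (q := Rmax p (Rmin b r)).
  assert (Hp : a <= p /\ p <= q /\ q <= b /\ q - p <= r - l)
    by (unfold q, p, Rmin, Rmax; repeat destruct Rle_dec; lra).
  rewrite <- (RInt_Chasles f a p b), <- (RInt_Chasles f p q b) by auto.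
  rewrite (RInt_vanishing f a p), (RInt_vanishing f q b)
    by (lra || (intros z Hz; apply Hsupp; unfold q, p, Rmin, Rmax in *;
                repeat destruct Rle_dec; lra)).
  rewrite Rplus_0_l, Rplus_0_r.
  apply Rle_trans with ((q - p) * M).
  - apply abs_RInt_le_const; auto; lra.
  - apply Rmult_le_compat_r; lra.
Qed.

Lemma averaged_difference_bound G1 G2 rho M : 0 <= rho ->
  loc_integrable G1 -> loc_integrable G2 ->
  (forall z, Rabs (G2 z - G1 z) <= M) ->
  (forall z, rho < Rabs z -> G2 z = G1 z) ->
  forall x y,
    Rabs (Aop (Aop G2) x - Aop (Aop G1) x) <= 2 * rho * M /\
    Rabs (Aop G2 y - Aop G1 y) <= 2 * rho * M.
Proof.
  intros Hrho H1 H2 HM Hsupp x y.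
  set (D := fun z => G2 z - G1 z).
  assert (HD : loc_integrable D) by (intros u v; apply (ex_RInt_minus G2 G1); auto).
  assert (HAD : forall t, Rabs (window D t) <= 2 * rho * M).
  { intros t. replace (2 * rho * M) with ((rho - - rho) * M) by ring.
    apply RInt_supported_bound; auto; try lra.
    intros z Hz. unfold D. rewrite Hsupp; [ring|].
    destruct Hz; [rewrite Rabs_left | rewrite Rabs_right]; lra. }
  assert (Hdiff : (fun t => window G2 t - window G1 t) = window D).
  { apply functional_extensionality. intros t. symmetry. apply window_minus; auto. }
  rewrite !(Aop_window G1), !(Aop_window G2), !Aop_window by
    (auto; apply window_loc_integrable; auto).
  split.
  - rewrite <- window_minus, Hdiff by (apply window_loc_integrable; auto).
    apply window_bound; auto. apply window_loc_integrable, HD.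
  - rewrite <- window_minus by auto. apply HAD.
Qed.

Lemma sgn_pos r : 0 < r -> sgn r = 1.
Proof. intros; unfold sgn; destruct (Rlt_dec 0 r); lra. Qed.

Lemma sgn_neg r : r < 0 -> sgn r = -1.
Proof. intros; unfold sgn; destruct (Rlt_dec 0 r); [lra|]; destruct (Rlt_dec r 0); lra. Qed.

Lemma sgn_loc_integrable : loc_integrable sgn.
Proof.
  assert (Hto0 : forall u, ex_RInt sgn u 0).
  { intros u. destruct (Rlt_dec u 0).
    - apply (ex_RInt_ext (fun _ => -1)); [|apply ex_RInt_const].
      intros x. rewrite Rmin_left, Rmax_right by lra. intros; rewrite sgn_neg; lra.
    - apply (ex_RInt_ext (fun _ => 1)); [|apply ex_RInt_const].
      intros x. rewrite Rmin_right, Rmax_left by lra. intros; rewrite sgn_pos; lra. }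
  intros u v. apply (ex_RInt_Chasles _ u 0 v); auto. apply ex_RInt_swap, Hto0.
Qed.

Lemma derivative_bound_lipschitz f f' K a b :
  (forall x, derivable_pt_lim f x (f' x)) -> (forall x, Rabs (f' x) <= K) ->
  Rabs (f b - f a) <= K * Rabs (b - a).
Proof.
  intros Hf HK.
  assert (Hmvt : forall u v, u < v -> Rabs (f v - f u) <= K * Rabs (v - u)).
  { intros u v Huv. destruct (MVT_cor2 f f' u v Huv) as [w [E _]]; auto.
    rewrite E, Rabs_mult. apply Rmult_le_compat_r; auto. apply Rabs_pos. }
  destruct (Rtotal_order a b) as [Hab | [Hab | Hab]]; auto.
  - subst. rewrite !Rminus_diag, Rabs_R0, Rmult_0_r. lra.
  - rewrite <- Rabs_Ropp, (Rabs_minus_sym b a).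
    replace (- (f b - f a)) with (f a - f b) by ring. auto.
Qed.

Lemma sign_of_crossing f f' x0 : f 0 = 0 ->
  (forall x, derivable_pt_lim f x (f' x)) -> (forall x, Rabs x < x0 -> 0 < f' x) ->
  (forall x, x0 < x -> 0 < f x) -> (forall x, x < - x0 -> f x < 0) ->
  forall z, sgn (f z) = sgn z.
Proof.
  intros Hf0 Hf Hf' Hpos Hneg z.
  destruct (Rtotal_order z 0) as [Hz | [Hz | Hz]].
  - rewrite (sgn_neg z Hz). apply sgn_neg.
    destruct (Rlt_dec z (- x0)); auto.
    destruct (MVT_cor2 f f' z 0 Hz (fun w _ => Hf w)) as [w [E Hw]].
    assert (0 < f' w) by (apply Hf'; rewrite Rabs_left; lra). nra.
  - subst. rewrite Hf0. reflexivity.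
  - rewrite (sgn_pos z Hz). apply sgn_pos.
    destruct (Rlt_dec x0 z); auto.
    destruct (MVT_cor2 f f' 0 z Hz (fun w _ => Hf w)) as [w [E Hw]].
    assert (0 < f' w) by (apply Hf'; rewrite Rabs_right; lra). nra.
Qed.

(* For a delta-admissible S, the zone where |R0 + S| <= delta lies in
   [-2 delta / d0, 2 delta / d0]: there (R0 + S)' > R0'(0) / 2 > d0 / 2. *)
Lemma admissible_transition_zone d d0 R0 dR0 S dS : 0 < d -> 0 < d0 < dR0 0 ->
  R0 0 = 0 -> S 0 = 0 ->
  (forall x, derivable_pt_lim R0 x (dR0 x)) -> (forall x, derivable_pt_lim S x (dS x)) ->
  admissible d R0 dR0 S dS ->
  (forall z, 2 * d / d0 < z -> d < R0 z + S z) /\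
  (forall z, z < - (2 * d / d0) -> R0 z + S z < - d).
Proof.
  intros Hd Hd0 HR HS DR DS (xm & xp & Hxx & Em & Ep & Hlt & Hgt & Hslope).
  assert (Dsum : forall x, derivable_pt_lim (fun x => R0 x + S x) x (dR0 x + dS x))
    by (intros x; apply (derivable_pt_lim_plus R0 S); auto).
  assert (Bp : xp * d0 < 2 * d).
  { destruct (MVT_cor2 _ _ 0 xp ltac:(lra) (fun w _ => Dsum w)) as [w [E Hw]].
    rewrite Ep, HR, HS in E. specialize (Hslope w ltac:(lra)). nra. }
  assert (Bm : - xm * d0 < 2 * d).
  { destruct (MVT_cor2 _ _ xm 0 ltac:(lra) (fun w _ => Dsum w)) as [w [E Hw]].
    rewrite Em, HR, HS in E. specialize (Hslope w ltac:(lra)). nra. }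
  assert (Q : 2 * d / d0 * d0 = 2 * d) by (field; lra).
  split; intros z Hz; [apply Hgt | apply Hlt]; nra.
Qed.

Section DifferenceEstimate.

Variables (CPsi d d0 L : R) (dPsi : R -> R -> R) (ddPsi_d : R -> R)
  (R0 dR0 S1 dS1 S2 dS2 : R -> R).

Hypothesis Hd : 0 < d.
Hypothesis Hd0 : 0 < d0 < dR0 0.
Hypothesis HddPsi : forall r, derivable_pt_lim (dPsi d) r (ddPsi_d r).
Hypothesis HddPsi_bound : forall r, Rabs (ddPsi_d r) <= CPsi / d.
Hypothesis HdPsi_sgn : forall r, ~ (- d < r < d) -> dPsi d r = sgn r.
Hypothesis HR0_0 : R0 0 = 0.
Hypothesis HdR0 : forall x, derivable_pt_lim R0 x (dR0 x).
Hypothesis HR0_sgn : forall z, sgn (R0 z) = sgn z.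
Hypothesis HS1_0 : S1 0 = 0.
Hypothesis HS2_0 : S2 0 = 0.
Hypothesis HdS1 : forall x, derivable_pt_lim S1 x (dS1 x).
Hypothesis HdS2 : forall x, derivable_pt_lim S2 x (dS2 x).
Hypothesis Hadm1 : admissible d R0 dR0 S1 dS1.
Hypothesis Hadm2 : admissible d R0 dR0 S2 dS2.
Hypothesis HL : forall t, Rabs (dS2 t - dS1 t) <= L.

Lemma Gop_loc_integrable S dS : (forall x, derivable_pt_lim S x (dS x)) ->
  loc_integrable (Gop dPsi d R0 S).
Proof.
  intros HdS u v.
  apply (ex_RInt_ext (fun w => dPsi d (R0 w + S w) - sgn w)).
  { intros w _. unfold Gop. rewrite HR0_sgn. reflexivity. }
  apply (ex_RInt_minus (fun w => dPsi d (R0 w + S w)) sgn); [|apply sgn_loc_integrable].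
  apply (ex_RInt_continuous (V:=R_CompleteNormedModule)). intros w _.
  apply continuity_pt_filterlim, derivable_continuous_pt.
  exists (ddPsi_d (R0 w + S w) * (dR0 w + dS w)).
  apply (derivable_pt_lim_comp (fun x => R0 x + S x) (dPsi d)); auto.
  apply (derivable_pt_lim_plus R0 S); auto.
Qed.

(* Outside [-rho, rho] both R0 + S_l lie beyond +-delta, where
   Psi_delta' = sgn, so G1 and G2 coincide there. *)
Lemma Gop_difference_support z : 2 * d / d0 < Rabs z ->
  Gop dPsi d R0 S2 z = Gop dPsi d R0 S1 z.
Proof.
  intros Hz. unfold Gop.
  destruct (admissible_transition_zone d d0 R0 dR0 S1 dS1) as [P1 N1]; auto.
  destruct (admissible_transition_zone d d0 R0 dR0 S2 dS2) as [P2 N2]; auto.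
  destruct (Rle_dec 0 z).
  - rewrite Rabs_right in Hz by lra.
    specialize (P1 z Hz). specialize (P2 z Hz).
    rewrite !HdPsi_sgn, (sgn_pos (R0 z + S1 z)), (sgn_pos (R0 z + S2 z)) by lra.
    reflexivity.
  - rewrite Rabs_left in Hz by lra.
    assert (Hz' : z < - (2 * d / d0)) by lra.
    specialize (N1 z Hz'). specialize (N2 z Hz').
    rewrite !HdPsi_sgn, (sgn_neg (R0 z + S1 z)), (sgn_neg (R0 z + S2 z)) by lra.
    reflexivity.
Qed.

(* Inside [-rho, rho]: |G2 - G1| <= (C_Psi / delta) |S2 - S1| <= (C_Psi / delta) L rho. *)
Lemma Gop_difference_bound z :
  Rabs (Gop dPsi d R0 S2 z - Gop dPsi d R0 S1 z) <= 2 * CPsi * L / d0.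
Proof.
  set (rho := 2 * d / d0).
  assert (HCPsi : 0 <= CPsi / d)
    by (specialize (HddPsi_bound 0); pose proof (Rabs_pos (ddPsi_d 0)); lra).
  assert (HL0 : 0 <= L)
    by (specialize (HL 0); pose proof (Rabs_pos (dS2 0 - dS1 0)); lra).
  assert (Hbound : 2 * CPsi * L / d0 = CPsi / d * (L * rho))
    by (unfold rho; field; lra).
  assert (Hrho : 0 <= rho) by (unfold rho; apply Rlt_le, Rdiv_lt_0_compat; lra).
  destruct (Rle_dec (Rabs z) rho) as [Hz | Hz].
  - assert (HS : Rabs (S2 z - S1 z) <= L * Rabs z).
    { replace (S2 z - S1 z) with ((S2 z - S1 z) - (S2 0 - S1 0))
        by (rewrite HS1_0, HS2_0; ring).
      rewrite <- (Rminus_0_r z) at 3.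
      apply (derivative_bound_lipschitz (fun x => S2 x - S1 x) (fun x => dS2 x - dS1 x));
        auto.
      intros x. apply (derivable_pt_lim_minus S2 S1); auto. }
    unfold Gop.
    replace (dPsi d (R0 z + S2 z) - sgn (R0 z) - (dPsi d (R0 z + S1 z) - sgn (R0 z)))
      with (dPsi d (R0 z + S2 z) - dPsi d (R0 z + S1 z)) by ring.
    eapply Rle_trans; [apply (derivative_bound_lipschitz _ ddPsi_d); auto|].
    replace (R0 z + S2 z - (R0 z + S1 z)) with (S2 z - S1 z) by ring.
    rewrite Hbound. apply Rmult_le_compat_l; auto.
    eapply Rle_trans; [apply HS|]. apply Rmult_le_compat_l; auto.
  - rewrite Gop_difference_support by (unfold rho in Hz; lra). rewrite Rminus_diag, Rabs_R0, Hbound.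
    apply Rmult_le_pos; auto. apply Rmult_le_pos; auto.
Qed.

Theorem Gop_lipschitz_estimate x y z :
  Rabs (Aop (Aop (Gop dPsi d R0 S2)) x - Aop (Aop (Gop dPsi d R0 S1)) x)
  + Rabs (Aop (Gop dPsi d R0 S2) y - Aop (Gop dPsi d R0 S1) y)
  + d * Rabs (Gop dPsi d R0 S2 z - Gop dPsi d R0 S1 z)
  <= (16 * CPsi / (d0 * d0) + 2 * CPsi / d0) * d * L.
Proof.
  destruct (averaged_difference_bound (Gop dPsi d R0 S1) (Gop dPsi d R0 S2)
              (2 * d / d0) (2 * CPsi * L / d0)) with (x := x) (y := y)
    as [HA2 HA1].
  - apply Rlt_le, Rdiv_lt_0_compat; lra.
  - apply (Gop_loc_integrable S1 dS1); auto.
  - apply (Gop_loc_integrable S2 dS2); auto.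
  - apply Gop_difference_bound.
  - apply Gop_difference_support.
  - pose proof (Gop_difference_bound z) as HG.
    assert (HdG := Rmult_le_compat_l d _ _ (Rlt_le _ _ Hd) HG).
    replace ((16 * CPsi / (d0 * d0) + 2 * CPsi / d0) * d * L)
      with (2 * (2 * d / d0) * (2 * CPsi * L / d0) * 2 + d * (2 * CPsi * L / d0))
      by (field; lra).
    lra.
Qed.

End DifferenceEstimate.

Lemma wave_profile_facts c0 x0 r0 d0 D0 k Rbar U alm bem c1 c al be dR0 :
  UnperturbedWaves c0 x0 r0 d0 D0 k Rbar U alm bem -> c1 < 1 ->
  c0 <= c <= c1 -> U c al be ->
  (forall x, derivable_pt_lim (member k Rbar c al be) x (dR0 x)) ->
  0 < d0 < dR0 0 /\ member k Rbar c al be 0 = 0 /\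
  forall z, sgn (member k Rbar c al be z) = sgn z.
Proof.
  intros (_ & Hx0 & Hr0 & Hd0 & _ & HUW) Hc1 Hc HU HdR0.
  destruct (HUW c ltac:(lra)) as (_ & _ & _ & _ & _ & HR).
  destruct (HR al be HU) as (_ & HR0 & HdR & _ & Hpos & Hneg).
  destruct (HdR dR0 HdR0) as [_ Hslope].
  split; [split; auto; apply Hslope; rewrite Rabs_R0; lra|].
  split; auto.
  apply (sign_of_crossing _ dR0 x0); auto.
  - intros x Hx. specialize (Hslope x Hx). lra.
  - intros x Hx. specialize (Hpos x Hx). lra.
  - intros x Hx. specialize (Hneg x Hx). lra.
Qed.

Theorem lemma3p5
  (CPsi : R) (Psi dPsi ddPsi : R -> R -> R)
  (c0 x0 r0 d0 D0 : R) (k : R -> R) (Rbar : R -> R -> R)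
  (U : R -> R -> R -> Prop) (alm bem : R -> R) (c1 : R) :
  PsiFamily CPsi Psi dPsi ddPsi ->
  UnperturbedWaves c0 x0 r0 d0 D0 k Rbar U alm bem ->
  c0 < c1 < 1 ->
  exists CL : R,
    forall (d c al be : R) (dR0 S1 S2 dS1 dS2 : R -> R),
      0 < d -> Idelta dPsi d = 0 ->
      c0 <= c <= c1 -> U c al be ->
      (forall x, derivable_pt_lim (member k Rbar c al be) x (dR0 x)) ->
      inX S1 -> inX S2 ->
      (forall x, derivable_pt_lim S1 x (dS1 x)) ->
      (forall x, derivable_pt_lim S2 x (dS2 x)) ->
      admissible d (member k Rbar c al be) dR0 S1 dS1 ->
      admissible d (member k Rbar c al be) dR0 S2 dS2 ->
      let G1 := Gop dPsi d (member k Rbar c al be) S1 in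
      let G2 := Gop dPsi d (member k Rbar c al be) S2 in
      forall L, (forall t, Rabs (dS2 t - dS1 t) <= L) ->
      forall x y z,
        Rabs (Aop (Aop G2) x - Aop (Aop G1) x) + Rabs (Aop G2 y - Aop G1 y)
        + d * Rabs (G2 z - G1 z) <= CL * d * L.
Proof.
  intros HPsi HUW Hc1.
  exists (16 * CPsi / (d0 * d0) + 2 * CPsi / d0).
  intros d c al be dR0 S1 S2 dS1 dS2 Hd _ Hc HU HdR0 [_ [HS1 _]] [_ [HS2 _]]
    HdS1 HdS2 Hadm1 Hadm2 G1 G2 L HL x y z.
  destruct (wave_profile_facts c0 x0 r0 d0 D0 k Rbar U alm bem c1 c al be dR0)
    as (Hd0 & HR0 & Hsgn); try tauto.
  destruct (HPsi d Hd) as (_ & HddPsi & _ & HdPsi_sgn & _ & HddPsi_bound).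
  apply (Gop_lipschitz_estimate CPsi d d0 L dPsi (ddPsi d)
           (member k Rbar c al be) dR0 S1 dS1 S2 dS2); auto.
Qed.
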